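(* There is a surjective morphism of operads $\mathrm{FMan}\twoheadrightarrow \mathrm{gr}_F\,\mathrm{PreLie}$ sending $-\circ-$ and $[-,-]$ to the cosets of the symmetrised pre-Lie product and of the pre-Lie bracket, respectively.
   Context: All operads are symmetric, reduced and connected, over a field $\mathbb{k}$ of characteristic zero. The operad $\mathrm{PreLie}$ is generated by one binary operation $a_1\cdot a_2$ with no symmetry, subject to $(a_1\cdot a_2)\cdot a_3 - a_1\cdot (a_2\cdot a_3) = (a_1\cdot a_3)\cdot a_2- a_1\cdot (a_3\cdot a_2)$. Put $a_1\circ a_2=a_1\cdot a_2+a_2\cdot a_1$ and $[a_1,a_2]=a_1\cdot a_2-a_2\cdot a_1$. The Lie filtration $F^\bullet\mathrm{PreLie}$ is the filtration by powers of the operadic ideal generated by $[-,-]$ (so $F^k\mathrm{PreLie}$ is spanned by tree composites of $\circ$ and $[-,-]$ with at least $k$ vertices labelled by $[-,-]$), and $\mathrm{gr}_F\mathrm{PreLie}$ is the associated graded operad. The operad $\mathrm{FMan}$ is generated by a symmetric binary operation $-\circ-$ and a skew-symmetric binary operation $[-,-]$ subject to associativity of $\circ$, the Jacobi identity for $[-,-]$, and the Hertling--Manin relation \begin{multline*} [a_1\circ a_2,a_3\circ a_4]= [a_1\circ a_2, a_3]\circ a_4+[a_1\circ a_2, a_4]\circ a_3+a_1\circ [a_2, a_3\circ a_4]+a_2\circ [a_1, a_3\circ a_4]-\\ (a_1\circ a_3)\circ[a_2,a_4]-(a_2\circ a_3)\circ[a_1,a_4]-(a_2\circ a_4)\circ[a_1,a_3]-(a_1\circ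 a_4)\circ[a_2,a_3] . \end{multline*} *)

(* Concrete encoding of binary-generated symmetric operads
   by multilinear tree monomials. *)
From HB Require Import structures.
From mathcomp Require Import all_boot all_order all_algebra all_fingroup.
Set Implicit Arguments. Unset Strict Implicit. Unset Printing Implicit Defensive.
Import GRing.Theory.
Local Open Scope ring_scope.

Inductive term (G : Type) : Type :=
| Var of nat
| Node of G & term G & term G.
Arguments Var {G}.

Section TermEq.
Variable G : eqType.
Fixpoint term_eqb (s t : term G) : bool :=
  match s, t with
  | Var i, Var j => i == j
  | Node g l r, Node g' l' r' => [&& g == g', term_eqb l l' & term_eqb r r']
  | _, _ => false
  end.
Lemma term_eqP : Equality.axiom term_eqb.
Proof.
elim=> [i|g l IHl r IHr] [j|g' l' r'] /=; try by constructor.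
- by apply: (iffP eqP) => [->|[]].
- case: (g =P g') => [<-|ne]; last by constructor; case.
  case: (IHl l') => [<-|ne]; last by constructor; case.
  by case: (IHr r') => [<-|ne]; constructor; [|case].
Qed.
HB.instance Definition _ := hasDecEq.Build (term G) term_eqP.
End TermEq.

Fixpoint vars G (t : term G) : seq nat :=
  match t with Var i => [:: i] | Node _ l r => vars l ++ vars r end.

Definition ml G n (t : term G) : bool := perm_eq (vars t) (iota 0 n).

Fixpoint tsubst G (s : nat -> term G) (t : term G) : term G :=
  match t with Var i => s i | Node g l r => Node g (tsubst s l) (tsubst s r) end.

Section LinComb.
Variables (k : fieldType) (G : eqType).
Definition lc := seq (k * term G).

Definition coef (c : lc) (t : term G) : k := \sum_(p <- c | p.2 == t) p.1.
Definition lc_eqv (c d : lc) : Prop := forall t, coef c t = coef d t.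

Definition lc_add (c d : lc) : lc := c ++ d.
Definition lc_scale (a : k) (c : lc) : lc := [seq (a * p.1, p.2) | p <- c].
Definition lc_sub (c d : lc) : lc := c ++ lc_scale (-1) d.
Definition lc_mono (t : term G) : lc := [:: (1, t)].

Definition lc_ml n (c : lc) : bool := all (fun p => ml n p.2) c.

Definition lc_subst (s : nat -> term G) (c : lc) : lc :=
  [seq (p.1, tsubst s p.2) | p <- c].

Definition lc_nodel (g : G) (c : lc) (t : term G) : lc :=
  [seq (p.1, Node g p.2 t) | p <- c].
Definition lc_noder (g : G) (t : term G) (c : lc) : lc :=
  [seq (p.1, Node g t p.2) | p <- c].
End LinComb.

Arguments lc_mono {k G}.

Definition lc_bind (k : fieldType) (G G' : eqType) (f : term G -> seq (k * term G')) (c : lc k G)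
  : seq (k * term G') := flatten [seq lc_scale p.1 (f p.2) | p <- c].

Definition lc_bilin (k : fieldType) (G G' : eqType) (f : term G -> term G -> seq (k * term G'))
  (c d : lc k G) : seq (k * term G') :=
  flatten [seq lc_scale (p.1 * q.1) (f p.2 q.2) | p <- c, q <- d].


(* Partial composition t o_i s, for t of arity m, s of arity n, i < m   *)
(* (0-based): x_j stays for j < i, x_i is replaced by s with variables  *)
(* shifted by i, and x_j becomes x_{j+n-1} for j > i.                   *)
Definition pcomp_t (G : Type) (i n : nat) (t s : term G) : term G :=
  tsubst (fun j => if (j < i)%N then Var j
                   else if j == i then tsubst (fun l => Var (l + i)%N) s
                   else Var (j + n).-1) t.

Definition pcomp (k : fieldType) (G : eqType) (i n : nat) (c d : lc k G) : lc k G :=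
  lc_bilin (fun t s => lc_mono (pcomp_t i n t s)) c d.

Definition act (k : fieldType) (G : eqType) (n : nat) (s : 'S_n) (c : lc k G)
  : lc k G :=
  lc_subst (fun j => Var (odflt j (omap (fun j' : 'I_n => val (s j')) (insub j)))) c.

(* The T-ideal (= in characteristic 0, on multilinear parts, the       *)
(* operadic ideal) generated by a set R of relations.                  *)
Inductive tideal (k : fieldType) (G : eqType) (R : lc k G -> Prop) : lc k G -> Prop :=
| ti_rel r (s : nat -> term G) : R r -> tideal R (lc_subst s r)
| ti_add c d : tideal R c -> tideal R d -> tideal R (lc_add c d)
| ti_scale a c : tideal R c -> tideal R (lc_scale a c)
| ti_eqv c d : lc_eqv c d -> tideal R c -> tideal R d
| ti_nil : tideal R [::]
| ti_nodel g c t : tideal R c -> tideal R (lc_nodel g c t)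
| ti_noder g t c : tideal R c -> tideal R (lc_noder g t c).

(* An operad "given by representatives": arity-n elements are the       *)
(* formal combinations of multilinear arity-n monomials over G, modulo  *)
(* a kernel K n; composition is substitution, S_n acts by relabelling.  *)
Definition opeq (k : fieldType) (G : eqType) (K : nat -> lc k G -> Prop)
  (n : nat) (c d : lc k G) : Prop := K n (lc_sub c d).

Record is_operad_morphism (k : fieldType) (G1 G2 : eqType)
  (K1 : nat -> lc k G1 -> Prop) (K2 : nat -> lc k G2 -> Prop)
  (phi : nat -> lc k G1 -> lc k G2) : Prop := {
  om_arity : forall n c, lc_ml n c -> lc_ml n (phi n c);
  om_welldef : forall n c d, lc_ml n c -> lc_ml n d ->
      opeq K1 n c d -> opeq K2 n (phi n c) (phi n d);
  om_linear : forall n (a : k) c d, lc_ml n c -> lc_ml n d ->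
      opeq K2 n (phi n (lc_add (lc_scale a c) d))
                (lc_add (lc_scale a (phi n c)) (phi n d));
  om_equivariant : forall n (s : 'S_n) c, lc_ml n c ->
      opeq K2 n (phi n (act s c)) (act s (phi n c));
  om_comp : forall m n i c d, (i < m)%N -> lc_ml m c -> lc_ml n d ->
      opeq K2 (m + n).-1 (phi (m + n).-1 (pcomp i n c d))
                         (pcomp i n (phi m c) (phi n d));
  om_unit : opeq K2 1 (phi 1%N (lc_mono (Var 0))) (lc_mono (Var 0))
}.

Definition surjective_morphism (k : fieldType) (G1 G2 : eqType)
  (K1 : nat -> lc k G1 -> Prop) (K2 : nat -> lc k G2 -> Prop)
  (phi : nat -> lc k G1 -> lc k G2) : Prop :=
  forall n d, lc_ml n d -> exists2 c, lc_ml n c & opeq K2 n (phi n c) d.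

Inductive fop := OCirc | OBr.
Definition fop_eqb (a b : fop) : bool :=
  match a, b with OCirc, OCirc | OBr, OBr => true | _, _ => false end.
Lemma fop_eqP : Equality.axiom fop_eqb.
Proof. by case; case; constructor. Qed.
HB.instance Definition _ := hasDecEq.Build fop fop_eqP.

(* the single pre-Lie product a . b is encoded by the alphabet unit *)

Section Concrete.
Variable k : fieldType.

Definition x (i : nat) {G} : term G := Var i.
Definition circ (a b : term fop) := Node OCirc a b.
Definition br (a b : term fop) := Node OBr a b.
Definition dot (a b : term unit) := Node tt a b.


Definition R_FMan (r : lc k fop) : Prop :=
  r = [:: (1, circ (x 0) (x 1)); (-1, circ (x 1) (x 0))] \/
  r = [:: (1, br (x 0) (x 1)); (1, br (x 1) (x 0))] \/
  r = [:: (1, circ (circ (x 0) (x 1)) (x 2)); (-1, circ (x 0) (circ (x 1) (x 2)))] \/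
  r = [:: (1, br (br (x 0) (x 1)) (x 2)); (1, br (br (x 1) (x 2)) (x 0));
          (1, br (br (x 2) (x 0)) (x 1))] \/
  (* Hertling--Manin (a_1,a_2,a_3,a_4 = x_0,x_1,x_2,x_3), as LHS - RHS *)
  r = [:: (1, br (circ (x 0) (x 1)) (circ (x 2) (x 3)));
          (-1, circ (br (circ (x 0) (x 1)) (x 2)) (x 3));
          (-1, circ (br (circ (x 0) (x 1)) (x 3)) (x 2));
          (-1, circ (x 0) (br (x 1) (circ (x 2) (x 3))));
          (-1, circ (x 1) (br (x 0) (circ (x 2) (x 3))));
          (1, circ (circ (x 0) (x 2)) (br (x 1) (x 3)));
          (1, circ (circ (x 1) (x 2)) (br (x 0) (x 3)));
          (1, circ (circ (x 1) (x 3)) (br (x 0) (x 2)));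
          (1, circ (circ (x 0) (x 3)) (br (x 1) (x 2)))].

Definition K_FMan (n : nat) (c : lc k fop) : Prop :=
  lc_ml n c /\ tideal R_FMan c.

Definition R_PreLie (r : lc k unit) : Prop :=
  r = [:: (1, dot (dot (x 0) (x 1)) (x 2)); (-1, dot (x 0) (dot (x 1) (x 2)));
          (-1, dot (dot (x 0) (x 2)) (x 1)); (1, dot (x 0) (dot (x 2) (x 1)))].

Definition lc_dot (c d : lc k unit) : lc k unit :=
  lc_bilin (fun s t => lc_mono (dot s t)) c d.
Fixpoint prelie_t (t : term fop) : lc k unit :=
  match t with
  | Var i => lc_mono (Var i)
  | Node OCirc a b => lc_add (lc_dot (prelie_t a) (prelie_t b))
                             (lc_dot (prelie_t b) (prelie_t a))
  | Node OBr a b => lc_sub (lc_dot (prelie_t a) (prelie_t b))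
                           (lc_dot (prelie_t b) (prelie_t a))
  end.
Definition prelie (c : lc k fop) : lc k unit := lc_bind prelie_t c.

Fixpoint nbr (t : term fop) : nat :=
  match t with
  | Var _ => 0%N
  | Node g a b => ((g == OBr) + nbr a + nbr b)%N
  end.

(* The Lie filtration: y in PreLie(n) (a representative) lies in F^p(n)
   iff it is congruent, modulo the pre-Lie relations, to a linear
   combination of tree composites of o and [-,-] of arity n with at least
   p vertices labelled [-,-]. *)
Definition inF (p n : nat) (y : lc k unit) : Prop :=
  exists2 d : lc k fop, lc_ml n d && all (fun q => (p <= nbr q.2)%N) d &
    tideal R_PreLie (lc_sub y (prelie d)).

Definition part (p : nat) (c : lc k fop) : lc k fop :=
  [seq q <- c | nbr q.2 == p].

(* gr_F PreLie(n) = (+)_p F^p(n)/F^(p+1)(n), represented by combinations of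
   {o,[,]}-monomials: a monomial with p brackets represents the coset of its
   pre-Lie image in F^p/F^(p+1).  K_grPreLie n is the kernel of this
   representation; operadic composition of homogeneous representatives is
   substitution, as in gr_F PreLie. *)
Definition K_grPreLie (n : nat) (c : lc k fop) : Prop :=
  lc_ml n c /\ forall p, inF p.+1 n (prelie (part p c)).

End Concrete.

(* The morphism is the identity on representatives: both operads are spanned by
   tree monomials in [o] and [[-,-]] and compose by substitution, so
   compatibility with composition, the symmetric action and the unit, as well as
   surjectivity, are immediate.  The content is that the kernel of FMan lies in
   that of gr_F PreLie: each bracket-homogeneous component, of degree p, of an
   element of the T-ideal generated by the FMan relations must be sent by
   [a o b |-> a.b + b.a] and [[a,b] |-> a.b - b.a] into F^(p+1).  For the
   generating relations this is an explicit identity in the free pre-Lie algebra,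
   checked by computation over the integers.  It propagates to the whole T-ideal
   because the pre-Lie T-ideal is stable under substitution of linear
   combinations and the images of [o] and [[-,-]] are the symmetrisation and
   antisymmetrisation of the pre-Lie product.  Projecting onto the multilinear
   part of arity n keeps the witnesses in the right arity. *)

From Pilot Require Import Defs.
From mathcomp Require Import all_boot all_algebra all_fingroup.
From mathcomp Require Import ring zify.
Set Implicit Arguments. Unset Strict Implicit. Unset Printing Implicit Defensive.
Import GRing.Theory.
Local Open Scope ring_scope.

Lemma all_flatten (T : Type) (a : pred T) (s : seq (seq T)) :
  all a (flatten s) = all (all a) s.
Proof. by elim: s => //= t s IHs; rewrite all_cat IHs. Qed.

Lemma filter_predC_all (T : Type) (a : pred T) (s : seq T) :
  all (predC a) s -> filter a s = [::].
Proof. by elim: s => //= u s IHs /andP[/negbTE -> /IHs]. Qed.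

(** * Linear forms on formal combinations *)

Definition lc_eval (k : fieldType) (G : eqType) (h : term G -> k) (c : lc k G) : k :=
  \sum_(p <- c) p.1 * h p.2.

Section LinearForms.
Variables (k : fieldType) (G : eqType).
Implicit Types (c d : lc k G) (h : term G -> k).

Lemma lc_eval_nil h : lc_eval h [::] = 0.
Proof. by rewrite /lc_eval big_nil. Qed.

Lemma lc_eval_cons h p c : lc_eval h (p :: c) = p.1 * h p.2 + lc_eval h c.
Proof. by rewrite /lc_eval big_cons. Qed.

Lemma lc_eval_cat h c d : lc_eval h (c ++ d) = lc_eval h c + lc_eval h d.
Proof. by rewrite /lc_eval big_cat. Qed.

Lemma lc_eval_scale h a c : lc_eval h (lc_scale a c) = a * lc_eval h c.
Proof.
by rewrite /lc_eval big_map mulr_sumr; apply: eq_bigr => p _ /=; rewrite mulrA.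
Qed.

Lemma lc_eval_sub h c d : lc_eval h (lc_sub c d) = lc_eval h c - lc_eval h d.
Proof. by rewrite lc_eval_cat lc_eval_scale mulN1r. Qed.

Lemma lc_eval_flatten h (cs : seq (lc k G)) :
  lc_eval h (flatten cs) = \sum_(c <- cs) lc_eval h c.
Proof. by rewrite /lc_eval big_flatten. Qed.

Lemma lc_eval_mono h t : lc_eval h (lc_mono t) = h t.
Proof. by rewrite /lc_eval big_seq1 mul1r. Qed.

Lemma lc_eval_map h (f : term G -> term G) c :
  lc_eval h [seq (p.1, f p.2) | p <- c] = lc_eval (h \o f) c.
Proof. by rewrite /lc_eval big_map. Qed.

Lemma lc_eval_filter h (P : pred (term G)) c :
  lc_eval h [seq p <- c | P p.2] = lc_eval (fun t => if P t then h t else 0) c.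
Proof.
rewrite /lc_eval big_filter big_mkcond; apply: eq_bigr => p _.
by case: (P p.2); rewrite ?mulr0.
Qed.

Lemma lc_evalD h1 h2 c :
  lc_eval h1 c + lc_eval h2 c = lc_eval (fun t => h1 t + h2 t) c.
Proof. by rewrite /lc_eval -big_split; apply: eq_bigr => p _; rewrite mulrDr. Qed.

Lemma lc_evalZ a h c : a * lc_eval h c = lc_eval (fun t => a * h t) c.
Proof. by rewrite /lc_eval mulr_sumr; apply: eq_bigr => p _; rewrite mulrCA. Qed.

Lemma eq_lc_eval h1 h2 c : h1 =1 h2 -> lc_eval h1 c = lc_eval h2 c.
Proof. by move=> e; apply: eq_bigr => p _; rewrite e. Qed.

Lemma lc_eval_coef h c (s : seq (term G)) : uniq s -> {subset map snd c <= s} ->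
  lc_eval h c = \sum_(t <- s) coef c t * h t.
Proof.
move=> s_uniq; elim: c => [|p c IHc] c_s.
  by rewrite lc_eval_nil big1 // => t _; rewrite /coef big_nil mul0r.
have p_s : p.2 \in s by apply: c_s; rewrite inE eqxx.
rewrite lc_eval_cons IHc => [|t t_c]; last by apply: c_s; rewrite inE t_c orbT.
have coef_cons t : coef (p :: c) t = (if p.2 == t then p.1 else 0) + coef c t.
  by rewrite /coef big_cons; case: ifP; rewrite ?add0r.
under [RHS]eq_bigr => t _ do rewrite coef_cons mulrDl.
rewrite big_split /=; congr (_ + _).
rewrite (big_rem p.2) //= eqxx big1_seq ?addr0 // => t /andP[_].
by case: eqP => [<-|_]; rewrite ?mul0r // mem_rem_uniqF.
Qed.

Lemma coefE c t : coef c t = lc_eval (fun u => (u == t)%:R) c.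
Proof.
rewrite /coef /lc_eval big_mkcond; apply: eq_bigr => p _.
by case: eqP; rewrite ?mulr1 ?mulr0.
Qed.

Lemma lc_eqvP c d : lc_eqv c d <-> forall h, lc_eval h c = lc_eval h d.
Proof.
split=> [cd h|cd t]; last by rewrite !coefE.
set s := undup (map snd (c ++ d)); have s_uniq : uniq s := undup_uniq _.
have c_s : {subset map snd c <= s} by move=> t tc; rewrite mem_undup map_cat mem_cat tc.
have d_s : {subset map snd d <= s} by move=> t td; rewrite mem_undup map_cat mem_cat td orbT.
rewrite (lc_eval_coef h s_uniq c_s) (lc_eval_coef h s_uniq d_s).
by apply: eq_bigr => t _; rewrite cd.
Qed.

Lemma lc_eqv_sym c d : lc_eqv c d -> lc_eqv d c.
Proof. by move=> cd t. Qed.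

Lemma lc_eval_eqv h c d : lc_eqv c d -> lc_eval h c = lc_eval h d.
Proof. by move/lc_eqvP. Qed.

Lemma tideal_flatten (T : Type) (R : lc k G -> Prop) (f : T -> lc k G) (s : seq T) :
  (forall a, tideal R (f a)) -> tideal R (flatten (map f s)).
Proof. by move=> Rf; elim: s => [|a s IHs] /=; [apply: ti_nil | apply: ti_add]. Qed.

End LinearForms.

Section BilinearForms.
Variables (k : fieldType) (G G' : eqType).

Lemma lc_eval_bind (h : term G' -> k) (f : term G -> lc k G') (c : lc k G) :
  lc_eval h (lc_bind f c) = lc_eval (fun t => lc_eval h (f t)) c.
Proof. by rewrite lc_eval_flatten big_map; apply: eq_bigr => p _; rewrite lc_eval_scale. Qed.

Lemma lc_eval_bilin (h : term G' -> k) (f : term G -> term G -> lc k G') (c d : lc k G) :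
  lc_eval h (lc_bilin f c d) =
  lc_eval (fun a => lc_eval (fun b => lc_eval h (f a b)) d) c.
Proof.
rewrite lc_eval_flatten big_allpairs_dep; apply: eq_bigr => p _.
rewrite /lc_eval mulr_sumr; apply: eq_bigr => q _.
by rewrite -/(lc_eval _ _) lc_eval_scale mulrA.
Qed.

Lemma lc_eval_exchange (F : term G -> term G' -> k) (c : lc k G) (d : lc k G') :
  lc_eval (fun a => lc_eval (F a) d) c = lc_eval (fun b => lc_eval (F^~ b) c) d.
Proof.
rewrite /lc_eval; under eq_bigr => p _ do rewrite mulr_sumr.
rewrite exchange_big; apply: eq_bigr => q _.
by rewrite mulr_sumr; apply: eq_bigr => p _; ring.
Qed.

Lemma all_bilin (Q : pred (term G')) (f : term G -> term G -> lc k G') (c d : lc k G) :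
  all (fun p => all (fun q => all (fun u => Q u.2) (f p.2 q.2)) d) c ->
  all (fun u => Q u.2) (lc_bilin f c d).
Proof.
elim: c => // p c IHc /= /andP[p_d c_d].
rewrite /lc_bilin allpairs_cons flatten_cat all_cat all_flatten all_map.
by rewrite -/(lc_bilin f c d) IHc // andbT; apply: sub_all p_d => q /=; rewrite /lc_scale all_map.
Qed.

End BilinearForms.

Definition lc_node (k : fieldType) (G : eqType) (g : G) (c d : lc k G) : lc k G :=
  lc_bilin (fun a b => lc_mono (Node g a b)) c d.

Fixpoint tlsubst (k : fieldType) (G : eqType) (S : nat -> lc k G) (t : term G) : lc k G :=
  match t with Var i => S i | Node g a b => lc_node g (tlsubst S a) (tlsubst S b) end.

Definition lsubst (k : fieldType) (G : eqType) (S : nat -> lc k G) (c : lc k G) : lc k G :=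
  lc_bind (tlsubst S) c.

Section Grafting.
Variables (k : fieldType) (G : eqType).
Implicit Types (c d : lc k G) (h : term G -> k) (S : nat -> lc k G) (R : lc k G -> Prop).

Lemma lc_eval_node h g c d :
  lc_eval h (lc_node g c d) = lc_eval (fun a => lc_eval (fun b => h (Node g a b)) d) c.
Proof.
rewrite lc_eval_bilin; apply: eq_lc_eval => a; apply: eq_lc_eval => b.
exact: lc_eval_mono.
Qed.

Lemma lc_eval_node_subl h g c1 c2 d :
  lc_eval h (lc_node g (lc_sub c1 c2) d) =
  lc_eval h (lc_node g c1 d) - lc_eval h (lc_node g c2 d).
Proof. by rewrite !lc_eval_node lc_eval_sub. Qed.

Lemma lc_eval_node_subr h g c d1 d2 :
  lc_eval h (lc_node g c (lc_sub d1 d2)) =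
  lc_eval h (lc_node g c d1) - lc_eval h (lc_node g c d2).
Proof. by rewrite !lc_eval_node !(lc_eval_exchange _ c) lc_eval_sub. Qed.

Lemma lc_eval_node_nodel h g g' c d e :
  lc_eval h (lc_node g (lc_node g' c d) e) =
  lc_eval (fun a => lc_eval (fun b => lc_eval (fun u => h (Node g (Node g' a b) u)) e) d) c.
Proof. by rewrite !lc_eval_node. Qed.

Lemma lc_eval_node_noder h g g' c d e :
  lc_eval h (lc_node g c (lc_node g' d e)) =
  lc_eval (fun a => lc_eval (fun b => lc_eval (fun u => h (Node g a (Node g' b u))) e) d) c.
Proof. by rewrite lc_eval_node; apply: eq_lc_eval => a; rewrite lc_eval_node. Qed.

Lemma lc_node_eqv g c c' d d' : lc_eqv c c' -> lc_eqv d d' ->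
  lc_eqv (lc_node g c d) (lc_node g c' d').
Proof.
move=> /lc_eqvP cc' /lc_eqvP dd'; apply/lc_eqvP => h; rewrite !lc_eval_node cc'.
by apply: eq_lc_eval => a; rewrite dd'.
Qed.

Lemma tideal_nodel R g c d : tideal R c -> tideal R (lc_node g c d).
Proof.
move=> Rc; apply: (@ti_eqv _ _ _ (flatten [seq lc_scale q.1 (lc_nodel g c q.2) | q <- d])).
  apply/lc_eqvP => h; rewrite lc_eval_flatten big_map lc_eval_node lc_eval_exchange.
  apply: eq_bigr => q _.
  by rewrite lc_eval_scale (lc_eval_map _ (fun a => Node g a q.2)).
by apply: tideal_flatten => q; apply/ti_scale/ti_nodel.
Qed.

Lemma tideal_noder R g c d : tideal R d -> tideal R (lc_node g c d).
Proof.
move=> Rd; apply: (@ti_eqv _ _ _ (flatten [seq lc_scale q.1 (lc_noder g q.2 d) | q <- c])).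
  apply/lc_eqvP => h; rewrite lc_eval_flatten big_map lc_eval_node.
  apply: eq_bigr => q _.
  by rewrite lc_eval_scale (lc_eval_map _ (fun b => Node g q.2 b)).
by apply: tideal_flatten => q; apply/ti_scale/ti_noder.
Qed.

Lemma lc_eval_lsubst h S c : lc_eval h (lsubst S c) = lc_eval (fun t => lc_eval h (tlsubst S t)) c.
Proof. exact: lc_eval_bind. Qed.

Lemma tlsubst_tsubst S (s : nat -> term G) t :
  tlsubst S (tsubst s t) = tlsubst (fun i => tlsubst S (s i)) t.
Proof. by elim: t => [i|g a IHa b IHb] //=; rewrite IHa IHb. Qed.

Lemma lsubst_subst S (s : nat -> term G) c :
  lsubst S (lc_subst s c) = lsubst (fun i => tlsubst S (s i)) c.
Proof.
rewrite /lsubst /lc_bind /lc_subst -map_comp; congr flatten; apply: eq_map => p /=.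
by rewrite tlsubst_tsubst.
Qed.

Lemma lsubst_cat S c d : lsubst S (c ++ d) = lsubst S c ++ lsubst S d.
Proof. by rewrite /lsubst /lc_bind map_cat flatten_cat. Qed.

Lemma lsubst_scale S a c : lc_eqv (lsubst S (lc_scale a c)) (lc_scale a (lsubst S c)).
Proof. by apply/lc_eqvP => h; rewrite lc_eval_scale !lc_eval_lsubst lc_eval_scale. Qed.

Lemma lc_eval_lsubst_sub h S c d :
  lc_eval h (lsubst S (lc_sub c d)) = lc_eval h (lsubst S c) - lc_eval h (lsubst S d).
Proof.
by rewrite lsubst_cat lc_eval_cat (lc_eval_eqv _ (lsubst_scale _ _ _)) lc_eval_scale mulN1r.
Qed.

Lemma lsubst_eqv S c d : lc_eqv c d -> lc_eqv (lsubst S c) (lsubst S d).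
Proof. by move=> /lc_eqvP cd; apply/lc_eqvP => h; rewrite !lc_eval_lsubst cd. Qed.

Lemma lsubst_nodel S g c t :
  lc_eqv (lsubst S (lc_nodel g c t)) (lc_node g (lsubst S c) (tlsubst S t)).
Proof.
apply/lc_eqvP => h; rewrite lc_eval_lsubst (lc_eval_map _ (fun a => Node g a t)).
rewrite lc_eval_node lc_eval_lsubst.
by apply: eq_lc_eval => u /=; rewrite lc_eval_node.
Qed.

Lemma lsubst_noder S g c t :
  lc_eqv (lsubst S (lc_noder g t c)) (lc_node g (tlsubst S t) (lsubst S c)).
Proof.
apply/lc_eqvP => h; rewrite lc_eval_lsubst (lc_eval_map _ (fun b => Node g t b)).
rewrite lc_eval_node lc_eval_exchange.
by rewrite lc_eval_lsubst; apply: eq_lc_eval => u /=; rewrite lc_eval_node lc_eval_exchange.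
Qed.

Lemma lsubst_node S g c d :
  lc_eqv (lsubst S (lc_node g c d)) (lc_node g (lsubst S c) (lsubst S d)).
Proof.
apply/lc_eqvP => h; rewrite lc_eval_lsubst !lc_eval_node lc_eval_lsubst.
apply: eq_lc_eval => a /=; under eq_lc_eval => b do rewrite lc_eval_node.
by rewrite lc_eval_exchange; apply: eq_lc_eval => u; rewrite lc_eval_lsubst.
Qed.

Lemma tideal_lsubst R S y :
  (forall r S', R r -> tideal R (lsubst S' r)) -> tideal R y -> tideal R (lsubst S y).
Proof.
move=> R_lsubst; elim=> {y}.
- by move=> r s Rr; rewrite lsubst_subst; apply: R_lsubst.
- by move=> c d _ Rc _ Rd; rewrite /lc_add lsubst_cat; apply: ti_add.
- by move=> a c _ Rc; apply: ti_eqv (lc_eqv_sym (lsubst_scale _ _ _)) _; apply: ti_scale.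
- by move=> c d cd _ Rc; apply: ti_eqv (lsubst_eqv _ cd) Rc.
- exact: ti_nil.
- by move=> g c t _ Rc; apply: ti_eqv (lc_eqv_sym (lsubst_nodel _ _ _ _)) _; apply: tideal_nodel.
- by move=> g t c _ Rc; apply: ti_eqv (lc_eqv_sym (lsubst_noder _ _ _ _)) _; apply: tideal_noder.
Qed.

End Grafting.

Definition vars_part (k : fieldType) (G : eqType) (P : pred (seq nat)) (c : lc k G) : lc k G :=
  [seq q <- c | P (vars q.2)].

Definition perm_invariant (P : pred (seq nat)) := forall s1 s2, perm_eq s1 s2 -> P s1 = P s2.

Lemma vars_tsubst (G : Type) (s : nat -> term G) t :
  vars (tsubst s t) = flatten [seq vars (s i) | i <- vars t].
Proof. by elim: t => [i|g a IHa b IHb] /=; rewrite ?cats0 // IHa IHb map_cat flatten_cat. Qed.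

Section VarsPart.
Variables (k : fieldType) (G : eqType).
Implicit Types (c d : lc k G) (P : pred (seq nat)) (R : lc k G -> Prop).

Lemma vars_part_cat P c d : vars_part P (c ++ d) = vars_part P c ++ vars_part P d.
Proof. exact: filter_cat. Qed.

Lemma vars_part_scale P a c : vars_part P (lc_scale a c) = lc_scale a (vars_part P c).
Proof. by rewrite /vars_part /lc_scale filter_map. Qed.

Lemma vars_part_sub P c d : vars_part P (lc_sub c d) = lc_sub (vars_part P c) (vars_part P d).
Proof. by rewrite /lc_sub vars_part_cat vars_part_scale. Qed.

Lemma vars_part_homogeneous P v c : perm_invariant P ->
  all (fun q => perm_eq (vars q.2) v) c -> vars_part P c = if P v then c else [::].
Proof.
move=> P_perm c_v; case: ifP => Pv; first by apply/all_filterP; apply: sub_all c_v => q /P_perm ->.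
by apply: filter_predC_all; apply: sub_all c_v => q /P_perm /= ->; rewrite Pv.
Qed.

Lemma homogeneous_subst (s : nat -> term G) v c :
  all (fun q => perm_eq (vars q.2) v) c ->
  all (fun q => perm_eq (vars q.2) (flatten [seq vars (s i) | i <- v])) (lc_subst s c).
Proof.
rewrite all_map => c_v; apply: sub_all c_v => q /= q_v.
by rewrite vars_tsubst perm_flatten ?perm_map.
Qed.

Lemma tideal_vars_part R y :
  (forall r, R r -> exists v, all (fun q => perm_eq (vars q.2) v) r) ->
  tideal R y -> forall P, perm_invariant P -> tideal R (vars_part P y).
Proof.
move=> R_hom.
elim=> {y} [r s Rr|c d _ Rc _ Rd|a c _ Rc|c d cd _ Rc||g c t _ Rc|g t c _ Rc] P P_perm.
- have [v r_v] := R_hom r Rr.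
  rewrite (vars_part_homogeneous P_perm (homogeneous_subst s r_v)).
  by case: ifP => _; [apply: ti_rel | apply: ti_nil].
- by rewrite vars_part_cat; apply: ti_add; [apply: Rc | apply: Rd].
- by rewrite vars_part_scale; apply/ti_scale/Rc.
- apply: (@ti_eqv _ _ _ (vars_part P c)); last exact: Rc.
  apply/lc_eqvP => h.
  by rewrite !(lc_eval_filter h (fun t => P (vars t))) (lc_eval_eqv _ cd).
- exact: ti_nil.
- rewrite /vars_part /lc_nodel filter_map; apply: (ti_nodel g t (Rc (fun s => P (s ++ vars t)) _)).
  by move=> s1 s2 s12; apply: P_perm; rewrite perm_cat2r.
- rewrite /vars_part /lc_noder filter_map; apply: (ti_noder g t (Rc (fun s => P (vars t ++ s)) _)).
  by move=> s1 s2 s12; apply: P_perm; rewrite perm_cat2l.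
Qed.

End VarsPart.

Section PreLieIdeal.
Variable k : fieldType.
Implicit Types (y : lc k unit) (S : nat -> lc k unit).

(* The pre-Lie relation is multilinear, so substituting combinations into it
   gives a combination of substitution instances. *)
Lemma tideal_prelie_lsubst S y : tideal (@R_PreLie k) y -> tideal (@R_PreLie k) (lsubst S y).
Proof.
apply: tideal_lsubst => r T Rr.
set E := flatten [seq flatten [seq flatten [seq lc_scale (a.1 * b.1 * e.1)
    (lc_subst (nth (Var 0) [:: a.2; b.2; e.2]) r) | e <- T 2%N] | b <- T 1%N] | a <- T 0%N].
apply: (@ti_eqv _ _ _ E); last by do 3!apply: tideal_flatten => ?; apply/ti_scale/ti_rel.
apply/lc_eqvP => h; rewrite {}/E {}Rr.
pose rel a b e := h (Node tt (Node tt a b) e) - h (Node tt a (Node tt b e))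
                  - h (Node tt (Node tt a e) b) + h (Node tt a (Node tt e b)).
transitivity (lc_eval (fun a => lc_eval (fun b => lc_eval (rel a b) (T 2%N)) (T 1%N)) (T 0%N)).
  rewrite lc_eval_flatten big_map; apply: eq_bigr => a _.
  rewrite lc_eval_flatten big_map mulr_sumr; apply: eq_bigr => b _.
  rewrite lc_eval_flatten big_map !mulr_sumr; apply: eq_bigr => e _.
  by rewrite lc_eval_scale /= !lc_eval_cons lc_eval_nil /rel /=; ring.
rewrite lc_eval_lsubst !lc_eval_cons lc_eval_nil /= !lc_eval_node_nodel !lc_eval_node_noder.
have swap F : lc_eval (fun a => lc_eval (fun b => lc_eval (F a b) (T 1%N)) (T 2%N)) (T 0%N) =
              lc_eval (fun a => lc_eval (fun e => lc_eval (F a^~ e) (T 2%N)) (T 1%N)) (T 0%N).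
  by apply: eq_lc_eval => a; apply: lc_eval_exchange.
rewrite !swap !mul1r addr0 !(lc_evalZ (-1)) !lc_evalD.
apply: eq_lc_eval => a; rewrite !(lc_evalZ (-1)) !lc_evalD.
apply: eq_lc_eval => b; rewrite !(lc_evalZ (-1)) !lc_evalD.
by apply: eq_lc_eval => e; rewrite /rel; ring.
Qed.

Lemma tideal_prelie_vars_part P y : perm_invariant P ->
  tideal (@R_PreLie k) y -> tideal (@R_PreLie k) (vars_part P y).
Proof.
move=> P_perm Ry; apply: tideal_vars_part Ry P P_perm => r ->.
by exists (iota 0 3).
Qed.

End PreLieIdeal.

Section PreLieImage.
Variable k : fieldType.
Implicit Types (c d : lc k fop) (h : term unit -> k).

Definition fop_sign (g : fop) : k := if g is OCirc then 1 else -1.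

Lemma lc_eval_prelie_t_node h g a b :
  lc_eval h (prelie_t k (Node g a b)) =
  lc_eval h (lc_node tt (prelie_t k a) (prelie_t k b))
  + fop_sign g * lc_eval h (lc_node tt (prelie_t k b) (prelie_t k a)).
Proof. by case: g; rewrite /= /lc_add ?lc_eval_sub ?lc_eval_cat ?mul1r ?mulN1r. Qed.

Lemma lc_eval_prelie h c : lc_eval h (prelie c) = lc_eval (fun t => lc_eval h (prelie_t k t)) c.
Proof. exact: lc_eval_bind. Qed.

Lemma prelie_tsubst (s : nat -> term fop) t :
  lc_eqv (prelie_t k (tsubst s t)) (lsubst (fun i => prelie_t k (s i)) (prelie_t k t)).
Proof.
elim: t => [i|g a IHa b IHb]; apply/lc_eqvP => h; first by rewrite lc_eval_lsubst /= lc_eval_mono.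
rewrite [tsubst _ _]/= lc_eval_prelie_t_node lc_eval_lsubst lc_eval_prelie_t_node -!lc_eval_lsubst.
rewrite !(lc_eval_eqv _ (lsubst_node _ _ _ _)).
by rewrite (lc_eval_eqv _ (lc_node_eqv _ IHa IHb)) (lc_eval_eqv _ (lc_node_eqv _ IHb IHa)).
Qed.

Lemma prelie_subst (s : nat -> term fop) c :
  lc_eqv (prelie (lc_subst s c)) (lsubst (fun i => prelie_t k (s i)) (prelie c)).
Proof.
apply/lc_eqvP => h; rewrite lc_eval_prelie lc_eval_map lc_eval_lsubst lc_eval_prelie.
by apply: eq_lc_eval => t; rewrite /= (lc_eval_eqv _ (prelie_tsubst s t)) lc_eval_lsubst.
Qed.

Lemma lc_eval_prelie_nodel h g c t :
  lc_eval h (prelie (lc_nodel g c t)) =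
  lc_eval h (lc_node tt (prelie c) (prelie_t k t))
  + fop_sign g * lc_eval h (lc_node tt (prelie_t k t) (prelie c)).
Proof.
rewrite lc_eval_prelie (lc_eval_map _ (fun a => Node g a t)) !lc_eval_node.
rewrite [in X in _ * X]lc_eval_exchange !lc_eval_prelie lc_evalZ lc_evalD.
apply: eq_lc_eval => a /=; rewrite lc_eval_prelie_t_node !lc_eval_node.
by rewrite [in X in _ * X]lc_eval_exchange.
Qed.

Lemma lc_eval_prelie_noder h g c t :
  lc_eval h (prelie (lc_noder g t c)) =
  lc_eval h (lc_node tt (prelie_t k t) (prelie c))
  + fop_sign g * lc_eval h (lc_node tt (prelie c) (prelie_t k t)).
Proof.
rewrite lc_eval_prelie (lc_eval_map _ (fun b => Node g t b)) !lc_eval_node.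
rewrite [in X in X + _]lc_eval_exchange !lc_eval_prelie lc_evalZ lc_evalD.
apply: eq_lc_eval => b /=; rewrite lc_eval_prelie_t_node !lc_eval_node.
by rewrite [in X in X + _]lc_eval_exchange.
Qed.

Lemma prelie_t_vars t : all (fun u => perm_eq (vars u.2) (vars t)) (prelie_t k t).
Proof.
elim: t => [i|g a IHa b IHb] /=; first by rewrite perm_refl.
have dot_vars u v (A B : lc k unit) :
    all (fun p => perm_eq (vars p.2) u) A -> all (fun p => perm_eq (vars p.2) v) B ->
    all (fun p => perm_eq (vars p.2) (u ++ v)) (lc_dot A B).
  move=> Au Bv; apply: (all_bilin (Q := fun t => perm_eq (vars t) (u ++ v))).
  apply: sub_all Au => p pu.
  by apply: sub_all Bv => q qv /=; rewrite andbT perm_cat.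
have ab := dot_vars _ _ _ _ IHa IHb.
have ba : all (fun p => perm_eq (vars p.2) (vars a ++ vars b))
              (lc_dot (prelie_t k b) (prelie_t k a)).
  by apply: sub_all (dot_vars _ _ _ _ IHb IHa) => p /perm_trans; apply; rewrite perm_catC.
by case: g; rewrite /lc_add /lc_sub all_cat ab //= /lc_scale all_map.
Qed.

Lemma vars_part_prelie P c : perm_invariant P -> vars_part P (prelie c) = prelie (vars_part P c).
Proof.
move=> P_perm; elim: c => // p c IHc.
rewrite /prelie /lc_bind /= vars_part_cat -/(lc_bind _ _) -/(prelie c) IHc /= vars_part_scale.
rewrite (vars_part_homogeneous P_perm (prelie_t_vars p.2)); by case: ifP.
Qed.

End PreLieImage.

(** * Vanishing in the associated graded *)

Section GradedVanishing.
Variable k : fieldType.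
Implicit Types (c d : lc k fop).

(* As [K_grPreLie], but with no arity constraint on the witnesses. *)
Definition gr_null c := forall p, exists2 d : lc k fop, all (fun q => p < nbr q.2)%N d &
  tideal (@R_PreLie k) (lc_sub (prelie (part p c)) (prelie d)).

Lemma lc_eval_part (h : term fop -> k) p c :
  lc_eval h (part p c) = lc_eval (fun t => if nbr t == p then h t else 0) c.
Proof. exact: (lc_eval_filter h (fun t => nbr t == p)). Qed.

Lemma part_node_shift p j (f : term fop -> term fop) c :
  (forall t, nbr (f t) = j + nbr t)%N ->
  part p [seq (q.1, f q.2) | q <- c] =
  if (j <= p)%N then [seq (q.1, f q.2) | q <- part (p - j) c] else [::].
Proof.
move=> nbr_f; rewrite /part filter_map; case: leqP => jp.
  by congr map; apply: eq_filter => q /=; rewrite /preim /= nbr_f; apply/eqP/eqP; lia.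
by rewrite filter_predC_all //; apply/allP => q _; rewrite /= /preim /= nbr_f; apply/eqP; lia.
Qed.

Lemma gr_null_add c d : gr_null c -> gr_null d -> gr_null (lc_add c d).
Proof.
move=> c0 d0 p; have [c' c'p Rc] := c0 p; have [d' d'p Rd] := d0 p.
exists (c' ++ d'); first by rewrite all_cat c'p d'p.
apply: (ti_eqv _ (ti_add Rc Rd)); apply/lc_eqvP => h.
by rewrite /lc_add /part filter_cat !lc_eval_cat !lc_eval_scale !lc_eval_prelie !lc_eval_cat; ring.
Qed.

Lemma gr_null_scale a c : gr_null c -> gr_null (lc_scale a c).
Proof.
move=> c0 p; have [c' c'p Rc] := c0 p.
exists (lc_scale a c'); first by rewrite /lc_scale all_map.
apply: (ti_eqv _ (ti_scale a Rc)); apply/lc_eqvP => h.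
rewrite /part /lc_scale filter_map -/(lc_scale a _) lc_eval_scale !lc_eval_sub.
by rewrite !lc_eval_prelie !lc_eval_scale; ring.
Qed.

Lemma gr_null_eqv c d : lc_eqv c d -> gr_null c -> gr_null d.
Proof.
move=> /lc_eqvP cd c0 p; have [c' c'p Rc] := c0 p.
exists c' => //; apply: (ti_eqv _ Rc); apply/lc_eqvP => h.
by rewrite !lc_eval_sub !lc_eval_prelie !lc_eval_part cd.
Qed.

Lemma gr_null_nodel g c t : gr_null c -> gr_null (lc_nodel g c t).
Proof.
move=> c0 p; rewrite /lc_nodel (@part_node_shift p ((g == OBr) + nbr t) (fun u => Node g u t))
  => [|u /=]; last by rewrite addnAC.
case: leqP => jp; last by exists [::] => //; apply: ti_nil.
have [c' c'p Rc] := c0 (p - ((g == OBr) + nbr t))%N.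
exists (lc_nodel g c' t).
  rewrite /lc_nodel all_map; apply: sub_all c'p => q /=.
  by move: jp; case: (g == OBr) => /=; lia.
set Y := lc_sub _ _ in Rc.
apply: (@ti_eqv _ _ _ (lc_node tt Y (prelie_t k t)
                       ++ lc_scale (fop_sign k g) (lc_node tt (prelie_t k t) Y))).
  apply/lc_eqvP => h; rewrite lc_eval_cat lc_eval_scale /Y lc_eval_node_subl lc_eval_node_subr.
  by rewrite lc_eval_sub !lc_eval_prelie_nodel; ring.
by apply: ti_add; [apply: tideal_nodel | apply/ti_scale/tideal_noder].
Qed.

Lemma gr_null_noder g c t : gr_null c -> gr_null (lc_noder g t c).
Proof.
move=> c0 p; rewrite /lc_noder (@part_node_shift p ((g == OBr) + nbr t) (Node g t)) //.
case: leqP => jp; last by exists [::] => //; apply: ti_nil.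
have [c' c'p Rc] := c0 (p - ((g == OBr) + nbr t))%N.
exists (lc_noder g t c').
  rewrite /lc_noder all_map; apply: sub_all c'p => q /=.
  by move: jp; case: (g == OBr) => /=; lia.
set Y := lc_sub _ _ in Rc.
apply: (@ti_eqv _ _ _ (lc_node tt (prelie_t k t) Y
                       ++ lc_scale (fop_sign k g) (lc_node tt Y (prelie_t k t)))).
  apply/lc_eqvP => h; rewrite lc_eval_cat lc_eval_scale /Y lc_eval_node_subl lc_eval_node_subr.
  by rewrite lc_eval_sub !lc_eval_prelie_noder; ring.
by apply: ti_add; [apply: tideal_noder | apply/ti_scale/tideal_nodel].
Qed.

Lemma tideal_gr_null (R : lc k fop -> Prop) c :
  (forall r s, R r -> gr_null (lc_subst s r)) -> tideal R c -> gr_null c.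
Proof.
move=> R0; elim=> {c}.
- exact: R0.
- by move=> c d _ c0 _ d0; apply: gr_null_add.
- by move=> a c _ c0; apply: gr_null_scale.
- by move=> c d cd _ c0; apply: gr_null_eqv cd c0.
- by move=> p; exists [::] => //; apply: ti_nil.
- by move=> g c t _ c0; apply: gr_null_nodel.
- by move=> g t c _ c0; apply: gr_null_noder.
Qed.

End GradedVanishing.

Section Arity.
Variables (k : fieldType) (G : eqType).
Local Open Scope nat_scope.

Lemma vars_rename (f : nat -> nat) (t : term G) :
  vars (tsubst (fun j => Var (f j)) t) = map f (vars t).
Proof. by rewrite vars_tsubst flatten_map1. Qed.

Lemma ml_act n (s : 'S_n) (c : lc k G) : lc_ml n c -> lc_ml n (Defs.act s c).
Proof.
move=> c_ml; rewrite /lc_ml /Defs.act /lc_subst all_map; apply: sub_all c_ml => p /= p_ml.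
rewrite /ml vars_rename; apply: perm_trans (perm_map _ p_ml) _.
rewrite -val_enum_ord -map_comp.
have -> : [seq odflt (val i) (omap (fun j : 'I_n => val (s j)) (insub (val i))) | i <- enum 'I_n]
          = map val (map s (enum 'I_n)).
  by rewrite -[in RHS]map_comp -map_comp -enumT; apply: eq_map => i /=; rewrite valK.
apply/perm_map/uniq_perm.
- by rewrite (map_inj_uniq (@perm_inj _ s)) enum_uniq.
- exact: enum_uniq.
- by move=> i; rewrite mem_enum; apply/mapP; exists (s^-1 i)%g; rewrite ?mem_enum ?permKV.
Qed.

Lemma size_vars_gt0 (t : term G) : 0 < size (vars t).
Proof. by elim: t => //= g a IHa b IHb; rewrite size_cat addn_gt0 IHa. Qed.

Lemma ml_pcomp_t m n i (t s : term G) : i < m -> ml m t -> ml n s ->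
  ml (m + n).-1 (pcomp_t i n t s).
Proof.
move=> im t_ml s_ml.
have n_gt0 : 0 < n by move: (perm_size s_ml) (size_vars_gt0 s); rewrite size_iota => ->.
rewrite /ml /pcomp_t vars_tsubst; set F := fun j => _.
apply: perm_trans (perm_flatten (perm_map _ t_ml)) _.
have -> : iota 0 m = iota 0 i ++ i :: iota i.+1 (m - i.+1).
  have {1}-> : m = i + (1 + (m - i.+1)) by lia.
  by rewrite iotaD iotaD /= add0n addn1.
have -> : (m + n).-1 = i + (n + (m - i.+1)) by lia.
rewrite iotaD iotaD add0n map_cat flatten_cat /=.
apply: perm_cat; last apply: perm_cat.
- rewrite (_ : map F _ = map (fun j => [:: j]) (iota 0 i)) ?flatten_map1 ?map_id //.
  by apply/eq_in_map => j; rewrite mem_iota /F => /andP[_ ->].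
- rewrite /F ltnn eqxx vars_rename; apply: perm_trans (perm_map _ s_ml) _.
  have -> : iota i n = [seq j + i | j <- iota 0 n].
    by rewrite -{1}(addn0 i) iotaDl; apply: eq_map => j; rewrite addnC.
  exact: perm_refl.
- rewrite (_ : map F _ = map (fun j => [:: (j + n).-1]) (iota i.+1 (m - i.+1))) ?flatten_map1.
    have -> : iota (i + n) (m - i.+1) = [seq (j + n).-1 | j <- iota i.+1 (m - i.+1)].
      rewrite -[in LHS](addn0 (i + n)) -[in RHS](addn0 i.+1) !iotaDl addn0 -map_comp.
      by apply: eq_map => j /=; lia.
    exact: perm_refl.
  apply/eq_in_map => j; rewrite mem_iota /F => /andP[ij _].
  by rewrite ltnNge ltnW //= gtn_eqF.
Qed.

Lemma ml_pcomp m n i (c d : lc k G) : i < m -> lc_ml m c -> lc_ml n d ->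
  lc_ml (m + n).-1 (Defs.pcomp i n c d).
Proof.
move=> im c_ml d_ml; rewrite /lc_ml /Defs.pcomp.
apply: (all_bilin (Q := ml (m + n).-1)); apply: sub_all c_ml => p p_ml.
by apply: sub_all d_ml => q q_ml /=; rewrite ml_pcomp_t.
Qed.

End Arity.

(** * Certificates computed over the integers *)

(* Integer analogues of the operations on formal combinations, so that
   identities between combinations with integer coefficients can be decided
   by computation and then transported to any field. *)
Definition zscale (A : Type) (a : int) (c : seq (int * A)) : seq (int * A) :=
  [seq (a * p.1, p.2) | p <- c].

Definition zsub (A : Type) (c d : seq (int * A)) : seq (int * A) := c ++ zscale (-1) d.

Definition zbind (A B : Type) (f : A -> seq (int * B)) (c : seq (int * A)) : seq (int * B) :=
  flatten [seq zscale p.1 (f p.2) | p <- c].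

Definition zdot (c d : seq (int * term unit)) : seq (int * term unit) :=
  flatten [seq zscale (p.1 * q.1) [:: (1, Node tt p.2 q.2)] | p <- c, q <- d].

Fixpoint zprelie_t (t : term fop) : seq (int * term unit) :=
  match t with
  | Var i => [:: (1, Var i)]
  | Node OCirc a b => zdot (zprelie_t a) (zprelie_t b) ++ zdot (zprelie_t b) (zprelie_t a)
  | Node OBr a b => zsub (zdot (zprelie_t a) (zprelie_t b)) (zdot (zprelie_t b) (zprelie_t a))
  end.

Definition zprelie (c : seq (int * term fop)) : seq (int * term unit) := zbind zprelie_t c.

Definition zprelie_rel : seq (int * term unit) :=
  [:: (1, dot (dot (x 0) (x 1)) (x 2)); (-1, dot (x 0) (dot (x 1) (x 2)));
      (-1, dot (dot (x 0) (x 2)) (x 1)); (1, dot (x 0) (dot (x 2) (x 1)))].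

(* [InstL a b c y] is the instance at [(x_a, x_b, x_c)] multiplied by [x_y] on
   the right, [InstR y a b c] the same multiplied on the left. *)
Inductive prelie_instance :=
| Inst of term unit & term unit & term unit
| InstL of nat & nat & nat & nat
| InstR of nat & nat & nat & nat.

Definition zinstance (i : prelie_instance) : seq (int * term unit) :=
  let at3 a b c := [seq (p.1, tsubst (nth (Var 0) [:: a; b; c]) p.2) | p <- zprelie_rel] in
  match i with
  | Inst a b c => at3 a b c
  | InstL a b c y => [seq (p.1, Node tt p.2 (Var y)) | p <- at3 (Var a) (Var b) (Var c)]
  | InstR y a b c => [seq (p.1, Node tt (Var y) p.2) | p <- at3 (Var a) (Var b) (Var c)]
  end.

Definition zcert (cs : seq (int * prelie_instance)) : seq (int * term unit) :=
  zbind zinstance cs.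

Fixpoint zcoef (c : seq (int * term unit)) (t : term unit) : int :=
  if c is p :: c' then (if p.2 == t then p.1 else 0) + zcoef c' t else 0.

Definition zeqvb (c d : seq (int * term unit)) : bool :=
  all (fun t => zcoef c t == zcoef d t) (map snd (c ++ d)).

Section IntToField.
Variable k : fieldType.

Definition lc_of_int (G : eqType) (c : seq (int * term G)) : lc k G :=
  [seq (p.1%:~R, p.2) | p <- c].

Lemma lc_of_int_cat (G : eqType) (c d : seq (int * term G)) :
  lc_of_int (c ++ d) = lc_of_int c ++ lc_of_int d.
Proof. exact: map_cat. Qed.

Lemma lc_of_int_scale (G : eqType) a (c : seq (int * term G)) :
  lc_of_int (zscale a c) = lc_scale a%:~R (lc_of_int c).
Proof. by elim: c => //= p c ->; rewrite intrM. Qed.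

Lemma lc_of_int_bind (G G' : eqType) (f : term G -> seq (int * term G')) (f' : term G -> lc k G')
    (c : seq (int * term G)) :
  (forall t, lc_of_int (f t) = f' t) -> lc_of_int (zbind f c) = lc_bind f' (lc_of_int c).
Proof.
move=> ff'; rewrite /zbind /lc_bind {1}/lc_of_int map_flatten -!map_comp; congr flatten.
by apply: eq_map => p /=; rewrite -ff' -lc_of_int_scale.
Qed.

Lemma lc_of_int_dot (c d : seq (int * term unit)) :
  lc_of_int (zdot c d) = lc_dot (lc_of_int c) (lc_of_int d).
Proof.
rewrite /lc_of_int /zdot /lc_dot /lc_bilin map_flatten; congr flatten.
elim: c => // p c IHc; rewrite /= map_cat IHc; congr (_ ++ _).
by rewrite -!map_comp; apply: eq_map => q /=; rewrite !mulr1 intrM.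
Qed.

Lemma lc_of_int_prelie_t t : lc_of_int (zprelie_t t) = prelie_t k t.
Proof.
elim: t => [i|[] a IHa b IHb] //=; rewrite /zsub lc_of_int_cat.
- by rewrite !lc_of_int_dot IHa IHb.
- by rewrite lc_of_int_scale !lc_of_int_dot IHa IHb.
Qed.

Lemma lc_of_int_prelie c : lc_of_int (zprelie c) = prelie (lc_of_int c).
Proof. exact: lc_of_int_bind lc_of_int_prelie_t. Qed.

Lemma tideal_lc_of_int_cert cs : tideal (@R_PreLie k) (lc_of_int (zcert cs)).
Proof.
rewrite /zcert /zbind /lc_of_int map_flatten -map_comp; apply: tideal_flatten => -[a i] /=.
rewrite -/(lc_of_int _) lc_of_int_scale; apply: ti_scale.
have rel a1 a2 a3 := @ti_rel _ _ (@R_PreLie k) _ (nth (Var 0) [:: a1; a2; a3]) (erefl _).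
by case: i => [a1 a2 a3|a1 a2 a3 y|y a1 a2 a3];
  [apply: rel | apply: ti_nodel (rel _ _ _) | apply: ti_noder (rel _ _ _)].
Qed.

Lemma zeqvbP (c d : seq (int * term unit)) : zeqvb c d -> lc_eqv (lc_of_int c) (lc_of_int d).
Proof.
have coef_int e t : coef (lc_of_int e) t = (zcoef e t)%:~R.
  elim: e => [|p e IHe]; first by rewrite /coef big_nil.
  by rewrite /coef big_cons -/(coef _ _) IHe /=; case: eqP; rewrite ?intrD ?add0r.
have zcoef0 e t : t \notin map snd e -> zcoef e t = 0.
  by elim: e => //= p e IHe; rewrite inE negb_or eq_sym => /andP[/negbTE -> /IHe ->]; rewrite addr0.
move=> /allP cd t; rewrite !coef_int.
have [/cd /eqP -> //|] := boolP (t \in map snd (c ++ d)).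
by rewrite map_cat mem_cat negb_or => /andP[/zcoef0 -> /zcoef0 ->].
Qed.

Lemma certificate_sound (r d : seq (int * term fop)) cs :
  zeqvb (zcert cs) (zsub (zprelie r) (zprelie d)) ->
  tideal (@R_PreLie k) (lc_sub (prelie (lc_of_int r)) (prelie (lc_of_int d))).
Proof.
move=> /zeqvbP cert; have := ti_eqv cert (tideal_lc_of_int_cert cs).
by rewrite /zsub lc_of_int_cat lc_of_int_scale !lc_of_int_prelie.
Qed.

End IntToField.

(** * The relations of [FMan] vanish in the associated graded *)

(* A relation [r] of bracket degree [q] is accompanied by a tail [d] of bracket
   degree [> q] and by a certificate writing [prelie r - prelie d] as an
   integral combination of instances of the pre-Lie relation. *)
Definition comm_rel : seq (int * term fop) :=
  [:: (1, circ (x 0) (x 1));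
      (-1, circ (x 1) (x 0))].

Definition skew_rel : seq (int * term fop) :=
  [:: (1, br (x 0) (x 1));
      (1, br (x 1) (x 0))].

Definition assoc_rel : seq (int * term fop) :=
  [:: (1, circ (circ (x 0) (x 1)) (x 2));
      (-1, circ (x 0) (circ (x 1) (x 2)))].

Definition assoc_tail : seq (int * term fop) :=
  [:: (-1, br (x 0) (circ (x 1) (x 2)));
      (1, circ (x 0) (br (x 1) (x 2)));
      (1, br (x 0) (br (x 1) (x 2)));
      (-1, br (circ (x 0) (x 1)) (x 2));
      (1, circ (br (x 0) (x 1)) (x 2));
      (-1, br (br (x 0) (x 1)) (x 2));
      (2, circ (br (x 0) (x 2)) (x 1))].

Definition assoc_cert : seq (int * prelie_instance) :=
  [:: (2, Inst (x 0) (x 1) (x 2));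
      (2, Inst (x 1) (x 0) (x 2));
      (2, Inst (x 2) (x 0) (x 1))].

Definition jacobi_rel : seq (int * term fop) :=
  [:: (1, br (br (x 0) (x 1)) (x 2));
      (1, br (br (x 1) (x 2)) (x 0));
      (1, br (br (x 2) (x 0)) (x 1))].

Definition jacobi_cert : seq (int * prelie_instance) :=
  [:: (1, Inst (x 0) (x 1) (x 2));
      (-1, Inst (x 1) (x 0) (x 2));
      (1, Inst (x 2) (x 0) (x 1))].

Definition hm_rel : seq (int * term fop) :=
  [:: (1, br (circ (x 0) (x 1)) (circ (x 2) (x 3)));
      (-1, circ (br (circ (x 0) (x 1)) (x 2)) (x 3));
      (-1, circ (br (circ (x 0) (x 1)) (x 3)) (x 2));
      (-1, circ (x 0) (br (x 1) (circ (x 2) (x 3))));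
      (-1, circ (x 1) (br (x 0) (circ (x 2) (x 3))));
      (1, circ (circ (x 0) (x 2)) (br (x 1) (x 3)));
      (1, circ (circ (x 1) (x 2)) (br (x 0) (x 3)));
      (1, circ (circ (x 1) (x 3)) (br (x 0) (x 2)));
      (1, circ (circ (x 0) (x 3)) (br (x 1) (x 2)))].

Definition hm_tail : seq (int * term fop) :=
  [:: (1, circ (x 0) (br (x 1) (br (x 2) (x 3))));
      (-1, br (x 0) (br (circ (x 1) (x 2)) (x 3)));
      (-2, circ (x 0) (br (br (x 1) (x 2)) (x 3)));
      (-1, br (br (x 0) (x 1)) (br (x 2) (x 3)));
      (1, br (br (x 0) (circ (x 1) (x 2))) (x 3));
      (2, circ (br (x 0) (br (x 1) (x 2))) (x 3));
      (-2, br (br (x 0) (br (x 1) (x 2))) (x 3));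
      (-1, circ (br (br (x 0) (x 1)) (x 2)) (x 3));
      (2, br (br (br (x 0) (x 1)) (x 2)) (x 3));
      (-1, br (x 0) (br (circ (x 1) (x 3)) (x 2)));
      (1, br (br (x 0) (circ (x 1) (x 3))) (x 2));
      (2, circ (br (x 0) (br (x 1) (x 3))) (x 2));
      (-2, br (br (x 0) (br (x 1) (x 3))) (x 2));
      (-1, circ (br (br (x 0) (x 1)) (x 3)) (x 2));
      (-1, br (circ (x 0) (x 2)) (br (x 1) (x 3)));
      (1, circ (br (x 0) (br (x 2) (x 3))) (x 1));
      (-2, circ (br (br (x 0) (x 2)) (x 3)) (x 1));
      (-1, br (circ (x 0) (x 3)) (br (x 1) (x 2)))].

Definition hm_cert : seq (int * prelie_instance) :=
  [:: (-2, Inst (dot (x 0) (x 1)) (x 2) (x 3));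
      (-2, Inst (dot (x 0) (x 3)) (x 1) (x 2));
      (1, Inst (dot (x 1) (x 2)) (x 0) (x 3));
      (-1, Inst (dot (x 1) (x 3)) (x 0) (x 2));
      (1, Inst (dot (x 2) (x 1)) (x 0) (x 3));
      (2, Inst (dot (x 3) (x 0)) (x 1) (x 2));
      (-1, Inst (dot (x 3) (x 1)) (x 0) (x 2));
      (2, Inst (dot (x 3) (x 2)) (x 0) (x 1));
      (2, Inst (x 2) (dot (x 0) (x 1)) (x 3));
      (-2, Inst (x 3) (dot (x 0) (x 1)) (x 2));
      (-2, Inst (x 1) (dot (x 0) (x 3)) (x 2));
      (-2, Inst (x 2) (dot (x 0) (x 3)) (x 1));
      (4, Inst (x 3) (dot (x 1) (x 0)) (x 2));
      (-1, Inst (x 0) (dot (x 1) (x 2)) (x 3));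
      (-3, Inst (x 3) (dot (x 1) (x 2)) (x 0));
      (-3, Inst (x 0) (dot (x 1) (x 3)) (x 2));
      (-1, Inst (x 2) (dot (x 1) (x 3)) (x 0));
      (-1, Inst (x 0) (dot (x 2) (x 1)) (x 3));
      (5, Inst (x 3) (dot (x 2) (x 1)) (x 0));
      (2, Inst (x 1) (dot (x 3) (x 0)) (x 2));
      (2, Inst (x 2) (dot (x 3) (x 0)) (x 1));
      (1, Inst (x 0) (dot (x 3) (x 1)) (x 2));
      (3, Inst (x 2) (dot (x 3) (x 1)) (x 0));
      (-2, Inst (x 0) (dot (x 3) (x 2)) (x 1));
      (-2, Inst (x 1) (dot (x 3) (x 2)) (x 0));
      (2, InstL 1 2 3 0);
      (2, InstR 0 1 2 3);
      (-2, InstL 2 1 3 0);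
      (-2, InstR 0 2 1 3);
      (-2, InstL 3 1 2 0);
      (2, InstR 0 3 1 2);
      (2, InstL 0 2 3 1);
      (2, InstR 1 0 2 3);
      (-2, InstL 2 0 3 1);
      (-2, InstR 1 2 0 3);
      (2, InstL 3 0 2 1);
      (2, InstR 1 3 0 2);
      (-2, InstL 0 1 3 2);
      (2, InstR 2 0 1 3);
      (-2, InstL 1 0 3 2);
      (-2, InstR 2 1 0 3);
      (-2, InstL 3 0 1 2);
      (2, InstR 2 3 0 1)].

Section FManRelations.
Variable k : fieldType.

Lemma nbr_tsubst (s : nat -> term fop) t :
  nbr (tsubst s t) = (nbr t + sumn [seq nbr (s i) | i <- vars t])%N.
Proof.
elim: t => [i|g a IHa b IHb] /=; first by rewrite addn0.
by rewrite IHa IHb map_cat sumn_cat !addnA; congr (_ + _)%N; rewrite addnAC.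
Qed.

Lemma gr_null_certified (r d : seq (int * term fop)) cs n q :
  all (fun p => ml n p.2 && (nbr p.2 == q)) r ->
  all (fun p => ml n p.2 && (q < nbr p.2)%N) d ->
  zeqvb (zcert cs) (zsub (zprelie r) (zprelie d)) ->
  forall s, gr_null (lc_subst s (lc_of_int k r)).
Proof.
move=> r_deg d_deg cert s p.
set M := sumn [seq nbr (s i) | i <- iota 0 n]; set N := (q + M)%N.
have nbr_subst t : ml n t -> nbr (tsubst s t) = (nbr t + M)%N.
  by move=> t_ml; rewrite nbr_tsubst (perm_sumn (perm_map _ t_ml)).
have r_N : all (fun u => nbr u.2 == N) (lc_subst s (lc_of_int k r)).
  by rewrite !all_map; apply: sub_all r_deg => u /andP[/nbr_subst /= -> /eqP ->].
have [->|pN] := eqVneq p N; last first.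
  exists [::] => //; rewrite (_ : part p _ = [::]); first exact: ti_nil.
  by apply: filter_predC_all; apply: sub_all r_N => u /= /eqP ->; rewrite eq_sym.
exists (lc_subst s (lc_of_int k d)).
  rewrite !all_map; apply: sub_all d_deg => u /andP[/nbr_subst /= ->]; lia.
rewrite (_ : part N _ = lc_subst s (lc_of_int k r)); last exact/all_filterP.
have := tideal_prelie_lsubst (fun i => prelie_t k (s i)) (certificate_sound k cert).
apply: ti_eqv; apply/lc_eqvP => h; rewrite lc_eval_lsubst_sub !lc_eval_sub.
by rewrite !(lc_eval_eqv _ (prelie_subst _ _)).
Qed.

Lemma gr_null_FMan (r : lc k fop) s : R_FMan r -> gr_null (lc_subst s r).
Proof.
case=> [->|[->|[->|[->|->]]]].
- by apply: (@gr_null_certified comm_rel [::] [::] 2 0); vm_compute.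
- by apply: (@gr_null_certified skew_rel [::] [::] 2 1); vm_compute.
- by apply: (@gr_null_certified assoc_rel assoc_tail assoc_cert 3 0); vm_compute.
- by apply: (@gr_null_certified jacobi_rel [::] jacobi_cert 3 2); vm_compute.
- by apply: (@gr_null_certified hm_rel hm_tail hm_cert 4 1); vm_compute.
Qed.

End FManRelations.

Section Kernels.
Variable k : fieldType.

Lemma K_FMan_sub_K_grPreLie n (c : lc k fop) : K_FMan n c -> K_grPreLie n c.
Proof.
case=> c_ml Rc; split=> // p.
have [d d_deg Rd] := tideal_gr_null (@gr_null_FMan k) Rc p.
pose P : pred (seq nat) := perm_eq^~ (iota 0 n).
have P_perm : perm_invariant P by move=> s1 s2 /permPl; rewrite /P => ->.
exists (vars_part P d).
  apply/andP; split; first exact: filter_all.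
  by rewrite all_filter; apply: sub_all d_deg => q /= ->; rewrite implybT.
have := tideal_prelie_vars_part P_perm Rd.
rewrite vars_part_sub !vars_part_prelie // (_ : vars_part P (part p c) = part p c) //.
by apply/all_filterP; rewrite all_filter; apply: sub_all c_ml => q q_ml; apply/implyP.
Qed.

Lemma opeq_grPreLie_refl n (c : lc k fop) : lc_ml n c -> opeq (@K_grPreLie k) n c c.
Proof.
move=> c_ml; split; first by rewrite /lc_ml /lc_sub all_cat -/(lc_ml n c) c_ml all_map.
move=> p; exists [::] => //; apply: (ti_eqv _ (ti_nil _)); apply/lc_eqvP => h.
by rewrite lc_eval_nil lc_eval_sub lc_eval_prelie lc_eval_part lc_eval_sub subrr lc_eval_nil subrr.
Qed.

End Kernels.

Theorem lemma4 (k : fieldType) (char0 : [pchar k] =i pred0) :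
  exists phi : nat -> lc k fop -> lc k fop,
    [/\ is_operad_morphism (@K_FMan k) (@K_grPreLie k) phi,
        surjective_morphism (@K_FMan k) (@K_grPreLie k) phi,
        opeq (@K_grPreLie k) 2 (phi 2%N (lc_mono (circ (x 0) (x 1))))
                               (lc_mono (circ (x 0) (x 1)))
      & opeq (@K_grPreLie k) 2 (phi 2%N (lc_mono (br (x 0) (x 1))))
                               (lc_mono (br (x 0) (x 1)))].
Proof.
exists (fun _ c => c); split.
- split=> //.
  + by move=> n c d _ _; apply: K_FMan_sub_K_grPreLie.
  + move=> n a c d c_ml d_ml; apply: opeq_grPreLie_refl.
    by rewrite /lc_ml /lc_add all_cat /lc_scale all_map -!/(lc_ml n _) c_ml d_ml.
  + by move=> n s c c_ml; apply/opeq_grPreLie_refl/ml_act.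
  + by move=> m n i c d im c_ml d_ml; apply/opeq_grPreLie_refl/ml_pcomp.
  + exact: opeq_grPreLie_refl.
- by move=> n d d_ml; exists d => //; apply: opeq_grPreLie_refl.
- exact: opeq_grPreLie_refl.
- exact: opeq_grPreLie_refl.
Qed.
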